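(* Let $b_r\ge0$ and $b=b_r\vee b^*$. Then $(\mu-\alpha G(x))\mathbf 1_{\{x>b\}}\le0$ for all $x\ge0$, and if $b_r>b^*$ then $\lim_{x\nearrow b}G''(x)>0$. Likewise, with $b=b_r\vee b^{**}$: $(\mu-\alpha H(x))\mathbf 1_{\{x>b\}}\le0$ for all $x\ge0$, and if $b_r>b^{**}$ then $\lim_{x\nearrow b}H''(x)>0$.
   Context: Fix parameters $\mu>0$, $\sigma>0$, $\alpha>0$ and $k>1$. Set $r_1:=-\frac{\mu}{\sigma^2}+\sqrt{\frac{\mu^2}{\sigma^4}+\frac{2\alpha}{\sigma^2}}$ and $r_2:=-\frac{\mu}{\sigma^2}-\sqrt{\frac{\mu^2}{\sigma^4}+\frac{2\alpha}{\sigma^2}}$ (so $r_2<0<r_1$ and $r_2^2>r_1^2$). Let $b^*:=\frac{\log(r_2^2/r_1^2)}{r_1-r_2}>0$ and let $b^{**}>0$ be the unique positive solution of $r_1e^{-r_2b}-r_2e^{-r_1b}=k(r_1-r_2)$. Write $G(x)=G(x;b_r)$ and $H(x)=H(x;b_r)$, where: with $b=b_r\vee b^*$, $G(x;b_r):=\frac{e^{r_1x}-e^{r_2x}}{r_1e^{r_1b}-r_2e^{r_2b}}$ for $0\le x\le b$ and $G(x;b_r):=x-b+\frac{e^{r_1b}-e^{r_2b}}{r_1e^{r_1b}-r_2e^{r_2b}}$ for $x>b$; with $b=b_r\vee b^{**}$, $H(x;b_r):=\frac{1}{e^{r_1b}-e^{r_2b}}\Big(\frac{1-ke^{r_2b}}{r_1}e^{r_1x}-\frac{1-ke^{r_1b}}{r_2}e^{r_2x}\Big)$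 for $0\le x\le b$ and $H(x;b_r):=x-b+\frac{1}{e^{r_1b}-e^{r_2b}}\Big(\frac{1-ke^{r_2b}}{r_1}e^{r_1b}-\frac{1-ke^{r_1b}}{r_2}e^{r_2b}\Big)$ for $x>b$. *)

From Stdlib Require Import Reals Lra.
Open Scope R_scope.

Definition r1 (mu sigma alpha : R) : R :=
  - mu / sigma ^ 2 + sqrt (mu ^ 2 / sigma ^ 4 + 2 * alpha / sigma ^ 2).
Definition r2 (mu sigma alpha : R) : R :=
  - mu / sigma ^ 2 - sqrt (mu ^ 2 / sigma ^ 4 + 2 * alpha / sigma ^ 2).

Definition bstar (mu sigma alpha : R) : R :=
  let a := r1 mu sigma alpha in let c := r2 mu sigma alpha in
  ln (c ^ 2 / a ^ 2) / (a - c).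

Definition bss_eq (mu sigma alpha k b : R) : Prop :=
  let a := r1 mu sigma alpha in let c := r2 mu sigma alpha in
  a * exp (- c * b) - c * exp (- a * b) = k * (a - c).

Definition Gfun (mu sigma alpha br x : R) : R :=
  let a := r1 mu sigma alpha in let c := r2 mu sigma alpha in
  let b := Rmax br (bstar mu sigma alpha) in
  if Rle_dec x b then
    (exp (a * x) - exp (c * x)) / (a * exp (a * b) - c * exp (c * b))
  else
    x - b + (exp (a * b) - exp (c * b)) / (a * exp (a * b) - c * exp (c * b)).

Definition Hfun (mu sigma alpha k bss br x : R) : R :=
  let a := r1 mu sigma alpha in let c := r2 mu sigma alpha in
  let b := Rmax br bss in
  if Rle_dec x b then
    / (exp (a * b) - exp (c * b)) *
      ((1 - k * exp (c * b)) / a * exp (a * x) - (1 - k * exp (a * b)) / c * exp (c * x))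
  else
    x - b + / (exp (a * b) - exp (c * b)) *
      ((1 - k * exp (c * b)) / a * exp (a * b) - (1 - k * exp (a * b)) / c * exp (c * b)).

Definition indicator {P : Prop} (d : {P} + {~ P}) : R := if d then 1 else 0.

Definition left_lim_second_deriv_pos (F : R -> R) (b : R) : Prop :=
  exists (F1 F2 : R -> R) (L : R), 0 < L /\
    (forall x, 0 < x < b -> derivable_pt_lim F x (F1 x) /\ derivable_pt_lim F1 x (F2 x)) /\
    (forall eps, 0 < eps -> exists delta, 0 < delta /\
        forall x, 0 < x < b -> b - delta < x -> Rabs (F2 x - L) < eps).

(* Let r1 > 0 > r2 be the roots of the characteristic polynomial of
   (sigma^2/2) f'' + mu f' - alpha f = 0 (section [Roots]).  On (-oo, b] both G
   and H coincide with a combination  phi = A e^{r1 y} + B e^{r2 y}  ([expsum]),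
   which solves this ODE, and beyond b they continue linearly with slope 1; the
   coefficients make phi'(b) = 1.  The ODE at b then gives
        mu - alpha phi(b) = - (sigma^2/2) phi''(b),
   and since the continuation increases, mu - alpha f(x) <= 0 for x > b as soon
   as the left curvature phi''(b) is >= 0 ([continuation_nonpos]); a strictly
   positive curvature yields the limit claim ([left_lim_second_deriv_pos_expsum]).
   What remains is the sign of the curvature: for G it is the sign of
   r1^2 e^{r1 b} - r2^2 e^{r2 b}, i.e. of b - b^* ([curvature_factor_bstar],
   section [ValueG]); for H it is the sign of phi_bss(b) - phi_bss(b^{**}), where
   phi_bss(t) = r1 e^{-r2 t} - r2 e^{-r1 t} is increasing on [0, oo)
   ([phi_bss_increasing], section [ValueH]). *)

From Stdlib Require Import Reals Lra.
From Coquelicot Require Import Coquelicot.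
Open Scope R_scope.

Definition char_poly (mu sigma alpha r : R) : R :=
  sigma ^ 2 / 2 * r ^ 2 + mu * r - alpha.

Section Roots.
Variables mu sigma alpha : R.
Hypotheses (Hmu : 0 < mu) (Hsigma : 0 < sigma) (Halpha : 0 < alpha).

(* The discriminant under the square root in r1, r2; it exceeds (mu/sigma^2)^2,
   which separates the roots on either side of 0. *)
Let disc : R := mu ^ 2 / sigma ^ 4 + 2 * alpha / sigma ^ 2.

Let disc_gt_sq : (mu / sigma ^ 2) * (mu / sigma ^ 2) < disc.
Proof.
  assert (Hs2 : 0 < sigma ^ 2) by (apply pow_lt; lra).
  assert (0 < 2 * alpha / sigma ^ 2) by (apply Rdiv_lt_0_compat; lra).
  unfold disc; replace (mu ^ 2 / sigma ^ 4) with ((mu / sigma ^ 2) * (mu / sigma ^ 2))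
    by (field; lra); lra.
Qed.

Let sqrt_disc_sq : sqrt disc * sqrt disc = disc.
Proof. apply sqrt_sqrt; pose proof disc_gt_sq; nra. Qed.

Let mu_sigma_pos : 0 < mu / sigma ^ 2.
Proof. apply Rdiv_lt_0_compat; [lra | apply pow_lt; lra]. Qed.

Lemma char_poly_root (q : R) :
  q * q = disc -> char_poly mu sigma alpha (- mu / sigma ^ 2 + q) = 0.
Proof.
  intro Hq; unfold char_poly.
  replace (sigma ^ 2 / 2 * (- mu / sigma ^ 2 + q) ^ 2 + mu * (- mu / sigma ^ 2 + q) - alpha)
    with (sigma ^ 2 / 2 * (q * q - disc)) by (unfold disc; field; lra).
  rewrite Hq; ring.
Qed.

Lemma r1_root : char_poly mu sigma alpha (r1 mu sigma alpha) = 0.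
Proof. apply char_poly_root, sqrt_disc_sq. Qed.

Lemma r2_root : char_poly mu sigma alpha (r2 mu sigma alpha) = 0.
Proof.
  replace (r2 mu sigma alpha) with (- mu / sigma ^ 2 + - sqrt disc) by (unfold r2; fold disc; ring).
  apply char_poly_root; rewrite Rmult_opp_opp; apply sqrt_disc_sq.
Qed.

Lemma r1_pos : 0 < r1 mu sigma alpha.
Proof.
  pose proof (sqrt_pos disc); pose proof disc_gt_sq; pose proof sqrt_disc_sq.
  assert (mu / sigma ^ 2 < sqrt disc) by nra.
  unfold r1; fold disc; unfold Rdiv in *; lra.
Qed.

Lemma r2_neg : r2 mu sigma alpha < 0.
Proof.
  pose proof (sqrt_pos disc).
  unfold r2; fold disc; unfold Rdiv in *; lra.
Qed.

End Roots.

Definition expsum (A B a c y : R) : R := A * exp (a * y) + B * exp (c * y).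

Lemma expsum_derive (A B a c x : R) :
  derivable_pt_lim (expsum A B a c) x (expsum (A * a) (B * c) a c x).
Proof. apply is_derive_Reals; unfold expsum; auto_derive; [exact I | ring]. Qed.

Lemma expsum_ode (mu sigma alpha A B a c y : R) :
  char_poly mu sigma alpha a = 0 -> char_poly mu sigma alpha c = 0 ->
  sigma ^ 2 / 2 * expsum (A * a ^ 2) (B * c ^ 2) a c y
    + mu * expsum (A * a) (B * c) a c y - alpha * expsum A B a c y = 0.
Proof.
  intros Ha Hc; unfold char_poly, expsum in *.
  transitivity (A * exp (a * y) * (sigma ^ 2 / 2 * a ^ 2 + mu * a - alpha)
                + B * exp (c * y) * (sigma ^ 2 / 2 * c ^ 2 + mu * c - alpha)); [ring |].
  rewrite Ha, Hc; ring.
Qed.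

(* A function continued linearly with slope 1 beyond b from a solution phi of the
   ODE with phi'(b) = 1 and phi''(b) >= 0 satisfies mu - alpha f <= 0 on (b, oo):
   there  mu - alpha f(x) <= mu - alpha phi(b) = -(sigma^2/2) phi''(b). *)
Lemma continuation_nonpos (mu sigma alpha A B a c b : R) (f : R -> R) :
  0 < alpha -> char_poly mu sigma alpha a = 0 -> char_poly mu sigma alpha c = 0 ->
  (forall y, b < y -> f y = y - b + expsum A B a c b) ->
  expsum (A * a) (B * c) a c b = 1 ->
  0 <= expsum (A * a ^ 2) (B * c ^ 2) a c b ->
  forall x, (mu - alpha * f x) * indicator (Rlt_dec b x) <= 0.
Proof.
  intros Halpha Ha Hc Hcont Hslope Hcurv x.
  unfold indicator; destruct (Rlt_dec b x) as [Hx | _]; [| lra].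
  rewrite Hcont by exact Hx.
  pose proof (expsum_ode mu sigma alpha A B a c b Ha Hc) as Hode.
  rewrite Hslope in Hode.
  assert (0 <= sigma ^ 2 / 2 * expsum (A * a ^ 2) (B * c ^ 2) a c b)
    by (apply Rmult_le_pos; [pose proof (pow2_ge_0 sigma); lra | exact Hcurv]).
  nra.
Qed.

Lemma left_lim_second_deriv_pos_expsum (A B a c b : R) (f : R -> R) :
  (forall y, y <= b -> f y = expsum A B a c y) ->
  0 < expsum (A * a ^ 2) (B * c ^ 2) a c b ->
  left_lim_second_deriv_pos f b.
Proof.
  intros Hf Hcurv.
  set (F2 := expsum (A * a ^ 2) (B * c ^ 2) a c).
  assert (HF2 : forall x, derivable_pt_lim (expsum (A * a) (B * c) a c) x (F2 x)).
  { intro x; unfold F2; replace (A * a ^ 2) with (A * a * a) by ring;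
      replace (B * c ^ 2) with (B * c * c) by ring; apply expsum_derive. }
  exists (expsum (A * a) (B * c) a c), F2, (F2 b); split; [exact Hcurv | split].
  - intros x Hx; split; [| apply HF2].
    apply is_derive_Reals; apply is_derive_ext_loc with (f := expsum A B a c).
    + exists (mkposreal (b - x) ltac:(lra)); intros y Hy.
      symmetry; apply Hf.
      unfold ball in Hy; simpl in Hy; unfold AbsRing_ball, abs, minus, plus, opp in Hy;
        simpl in Hy; apply Rabs_def2 in Hy; lra.
    + apply is_derive_Reals, expsum_derive.
  - intros eps Heps.
    assert (Hcont : continuity_pt F2 b).
    { apply derivable_continuous_pt; exists (expsum (A * a ^ 2 * a) (B * c ^ 2 * c) a c b);
        apply expsum_derive. }
    destruct (Hcont eps Heps) as [delta [Hdelta Hclose]].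
    exists delta; split; [exact Hdelta |]; intros x Hx Hxd.
    apply Hclose; split; [split; [exact I | lra] |].
    simpl; unfold Rdist; rewrite Rabs_left; lra.
Qed.

(* For a > 0 > c, the zero of  a^2 e^{a b} - c^2 e^{c b}  is  b^* = ln(c^2/a^2)/(a-c),
   as this factorization shows. *)
Lemma curvature_factor_bstar (a c b : R) : 0 < a -> c < 0 ->
  a ^ 2 * exp (a * b) - c ^ 2 * exp (c * b)
  = c ^ 2 * exp (c * b) * (exp ((a - c) * (b - ln (c ^ 2 / a ^ 2) / (a - c))) - 1).
Proof.
  intros Ha Hc.
  assert (Hq : 0 < c ^ 2 / a ^ 2) by (apply Rdiv_lt_0_compat; nra).
  replace ((a - c) * (b - ln (c ^ 2 / a ^ 2) / (a - c)))
    with (a * b + - (c * b) + - ln (c ^ 2 / a ^ 2)) by (field; lra).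
  rewrite !exp_plus, !exp_Ropp, exp_ln by exact Hq.
  pose proof (exp_pos (c * b)); field; split; lra.
Qed.

Section ValueG.
Variables mu sigma alpha br : R.
Hypotheses (Hmu : 0 < mu) (Hsigma : 0 < sigma) (Halpha : 0 < alpha).

Local Notation a := (r1 mu sigma alpha).
Local Notation c := (r2 mu sigma alpha).
Local Notation bG := (Rmax br (bstar mu sigma alpha)).
Local Notation D := (a * exp (a * bG) - c * exp (c * bG)).

Let a_pos : 0 < a.
Proof. exact (r1_pos mu sigma alpha Hmu Hsigma Halpha). Qed.

Let c_neg : c < 0.
Proof. exact (r2_neg mu sigma alpha Hmu Hsigma). Qed.

Let D_pos : 0 < D.
Proof. pose proof a_pos; pose proof c_neg; pose proof (exp_pos (a * bG)); pose proof (exp_pos (c * bG)); nra. Qed.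

Lemma Gfun_below (y : R) : y <= bG -> Gfun mu sigma alpha br y = expsum (/ D) (- / D) a c y.
Proof.
  intro Hy; pose proof D_pos; unfold Gfun, expsum; cbv zeta.
  destruct (Rle_dec y bG); [field; lra | lra].
Qed.

Lemma Gfun_above (y : R) : bG < y -> Gfun mu sigma alpha br y = y - bG + expsum (/ D) (- / D) a c bG.
Proof.
  intro Hy; pose proof D_pos; unfold Gfun, expsum; cbv zeta.
  destruct (Rle_dec y bG); [lra | field; lra].
Qed.

Lemma G_slope : expsum (/ D * a) (- / D * c) a c bG = 1.
Proof. pose proof D_pos; unfold expsum; field; lra. Qed.

(* The left curvature G''(b-) = (a^2 e^{a b} - c^2 e^{c b}) / D has the sign of
   b - b^*. *)
Lemma G_curvature :
  expsum (/ D * a ^ 2) (- / D * c ^ 2) a c bG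
  = c ^ 2 * exp (c * bG) * (exp ((a - c) * (bG - bstar mu sigma alpha)) - 1) / D.
Proof.
  transitivity ((a ^ 2 * exp (a * bG) - c ^ 2 * exp (c * bG)) / D).
  - pose proof D_pos; unfold expsum; field; lra.
  - unfold Rdiv; f_equal; exact (curvature_factor_bstar a c bG a_pos c_neg).
Qed.

Lemma G_continuation_nonpos (x : R) :
  (mu - alpha * Gfun mu sigma alpha br x) * indicator (Rlt_dec bG x) <= 0.
Proof.
  apply (continuation_nonpos mu sigma alpha (/ D) (- / D) a c);
    [exact Halpha | apply r1_root | apply r2_root | exact Gfun_above | exact G_slope | ];
    try assumption.
  rewrite G_curvature.
  pose proof a_pos; pose proof c_neg; pose proof D_pos.
  assert (Hb : 0 <= (a - c) * (bG - bstar mu sigma alpha))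
    by (pose proof (Rmax_r br (bstar mu sigma alpha)); apply Rmult_le_pos; lra).
  pose proof (exp_ineq1_le ((a - c) * (bG - bstar mu sigma alpha))).
  pose proof (exp_pos (c * bG)); pose proof (pow2_ge_0 c).
  unfold Rdiv; apply Rmult_le_pos; [| left; apply Rinv_0_lt_compat; lra].
  apply Rmult_le_pos; [apply Rmult_le_pos |]; lra.
Qed.

Lemma G_left_second_deriv :
  bstar mu sigma alpha < br -> left_lim_second_deriv_pos (Gfun mu sigma alpha br) bG.
Proof.
  intro Hbr.
  apply (left_lim_second_deriv_pos_expsum (/ D) (- / D) a c); [exact Gfun_below |].
  rewrite G_curvature.
  pose proof a_pos; pose proof c_neg; pose proof D_pos.
  assert (Hb : 0 < (a - c) * (bG - bstar mu sigma alpha))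
    by (rewrite Rmax_left by lra; apply Rmult_lt_0_compat; lra).
  pose proof (exp_ineq1 ((a - c) * (bG - bstar mu sigma alpha)) ltac:(lra)).
  pose proof (exp_pos (c * bG)); assert (0 < c ^ 2) by nra.
  unfold Rdiv; apply Rmult_lt_0_compat; [| apply Rinv_0_lt_compat; lra].
  apply Rmult_lt_0_compat; [apply Rmult_lt_0_compat |]; lra.
Qed.

End ValueG.

(* The left-hand side of the equation defining b^{**}. *)
Definition phi_bss (a c t : R) : R := a * exp (- c * t) - c * exp (- a * t).

Lemma phi_bss_derive (a c t : R) :
  derivable_pt_lim (phi_bss a c) t (a * c * (exp (- a * t) - exp (- c * t))).
Proof. apply is_derive_Reals; unfold phi_bss; auto_derive; [exact I | ring]. Qed.

(* For a > 0 > c, phi_bss is strictly increasing on [0, oo): its derivative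
   a c (e^{-a t} - e^{-c t}) is positive for t > 0. *)
Lemma phi_bss_increasing (a c s t : R) :
  0 < a -> c < 0 -> 0 <= s < t -> phi_bss a c s < phi_bss a c t.
Proof.
  intros Ha Hc Hst.
  destruct (MVT_cor2 (phi_bss a c) (fun u => a * c * (exp (- a * u) - exp (- c * u))) s t)
    as [u [Hmvt Hu]]; [lra | intros u _; apply phi_bss_derive |].
  assert (exp (- a * u) < exp (- c * u)) by (apply exp_increasing; nra).
  assert (0 < a * c * (exp (- a * u) - exp (- c * u)) * (t - s))
    by (apply Rmult_lt_0_compat; [assert (a * c < 0) by nra; nra | lra]).
  lra.
Qed.

Section ValueH.
Variables mu sigma alpha k bss br : R.
Hypotheses (Hmu : 0 < mu) (Hsigma : 0 < sigma) (Halpha : 0 < alpha).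
Hypotheses (Hbss_pos : 0 < bss) (Hbss_eq : bss_eq mu sigma alpha k bss).

Local Notation a := (r1 mu sigma alpha).
Local Notation c := (r2 mu sigma alpha).
Local Notation bH := (Rmax br bss).
Local Notation E := (exp (a * bH) - exp (c * bH)).
Local Notation A := (/ E * ((1 - k * exp (c * bH)) / a)).
Local Notation B := (- (/ E * ((1 - k * exp (a * bH)) / c))).

Let a_pos : 0 < a.
Proof. exact (r1_pos mu sigma alpha Hmu Hsigma Halpha). Qed.

Let c_neg : c < 0.
Proof. exact (r2_neg mu sigma alpha Hmu Hsigma). Qed.

Let E_pos : 0 < E.
Proof.
  assert (0 < bH) by (pose proof (Rmax_r br bss); lra).
  assert (exp (c * bH) < exp (a * bH)) by (apply exp_increasing; pose proof c_neg; pose proof a_pos; nra).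
  lra.
Qed.

Lemma Hfun_below (y : R) : y <= bH -> Hfun mu sigma alpha k bss br y = expsum A B a c y.
Proof.
  intro Hy; pose proof a_pos; pose proof c_neg; pose proof E_pos.
  unfold Hfun, expsum; cbv zeta.
  destruct (Rle_dec y bH); [field; lra | lra].
Qed.

Lemma Hfun_above (y : R) : bH < y -> Hfun mu sigma alpha k bss br y = y - bH + expsum A B a c bH.
Proof.
  intro Hy; pose proof a_pos; pose proof c_neg; pose proof E_pos.
  unfold Hfun, expsum; cbv zeta.
  destruct (Rle_dec y bH); [lra | field; lra].
Qed.

Lemma H_slope : expsum (A * a) (B * c) a c bH = 1.
Proof.
  pose proof a_pos; pose proof c_neg; pose proof E_pos.
  unfold expsum; field; lra.
Qed.

(* The left curvature H''(b-) has the sign of  phi_bss(b) - phi_bss(b^{**}). *)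
Lemma H_curvature :
  expsum (A * a ^ 2) (B * c ^ 2) a c bH
  = exp (a * bH) * exp (c * bH) * (phi_bss a c bH - phi_bss a c bss) / E.
Proof.
  pose proof a_pos; pose proof c_neg; pose proof E_pos.
  unfold bss_eq in Hbss_eq; cbv zeta in Hbss_eq; fold (phi_bss a c bss) in Hbss_eq.
  rewrite Hbss_eq; unfold phi_bss, expsum.
  replace (- c * bH) with (- (c * bH)) by ring; replace (- a * bH) with (- (a * bH)) by ring.
  rewrite !exp_Ropp.
  pose proof (exp_pos (a * bH)); pose proof (exp_pos (c * bH)).
  field; repeat split; lra.
Qed.

Lemma H_continuation_nonpos (x : R) :
  (mu - alpha * Hfun mu sigma alpha k bss br x) * indicator (Rlt_dec bH x) <= 0.
Proof.
  apply (continuation_nonpos mu sigma alpha A B a c);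
    [exact Halpha | apply r1_root | apply r2_root | exact Hfun_above | exact H_slope | ];
    try assumption.
  rewrite H_curvature.
  assert (phi_bss a c bss <= phi_bss a c bH).
  { destruct (Rle_lt_or_eq_dec bss bH (Rmax_r br bss)) as [Hlt | Heq].
    - left; apply phi_bss_increasing; [exact a_pos | exact c_neg | lra].
    - rewrite <- Heq; lra. }
  pose proof E_pos; pose proof (exp_pos (a * bH)); pose proof (exp_pos (c * bH)).
  unfold Rdiv; apply Rmult_le_pos; [| left; apply Rinv_0_lt_compat; lra].
  apply Rmult_le_pos; [left; apply Rmult_lt_0_compat |]; lra.
Qed.

Lemma H_left_second_deriv :
  bss < br -> left_lim_second_deriv_pos (Hfun mu sigma alpha k bss br) bH.
Proof.
  intro Hbr.
  apply (left_lim_second_deriv_pos_expsum A B a c); [exact Hfun_below |].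
  rewrite H_curvature.
  assert (phi_bss a c bss < phi_bss a c bH)
    by (rewrite Rmax_left by lra; apply phi_bss_increasing; [exact a_pos | exact c_neg | lra]).
  pose proof E_pos; pose proof (exp_pos (a * bH)); pose proof (exp_pos (c * bH)).
  unfold Rdiv; apply Rmult_lt_0_compat; [| apply Rinv_0_lt_compat; lra].
  apply Rmult_lt_0_compat; [apply Rmult_lt_0_compat |]; lra.
Qed.

End ValueH.

Theorem mainTheorem9 (mu sigma alpha k bss br : R)
  (Hmu : 0 < mu) (Hsigma : 0 < sigma) (Halpha : 0 < alpha) (Hk : 1 < k)
  (Hbss_pos : 0 < bss) (Hbss_eq : bss_eq mu sigma alpha k bss)
  (Hbss_uniq : forall b, 0 < b -> bss_eq mu sigma alpha k b -> b = bss)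
  (Hbr : 0 <= br) :
  (forall x, 0 <= x ->
     (mu - alpha * Gfun mu sigma alpha br x) *
       indicator (Rlt_dec (Rmax br (bstar mu sigma alpha)) x) <= 0) /\
  (bstar mu sigma alpha < br ->
     left_lim_second_deriv_pos (Gfun mu sigma alpha br) (Rmax br (bstar mu sigma alpha))) /\
  (forall x, 0 <= x ->
     (mu - alpha * Hfun mu sigma alpha k bss br x) *
       indicator (Rlt_dec (Rmax br bss) x) <= 0) /\
  (bss < br ->
     left_lim_second_deriv_pos (Hfun mu sigma alpha k bss br) (Rmax br bss)).
Proof.
  split; [| split; [| split]].
  - intros x _; exact (G_continuation_nonpos mu sigma alpha br Hmu Hsigma Halpha x).
  - exact (G_left_second_deriv mu sigma alpha br Hmu Hsigma Halpha).
  - intros x _; exact (H_continuation_nonpos mu sigma alpha k bss br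
                         Hmu Hsigma Halpha Hbss_pos Hbss_eq x).
  - exact (H_left_second_deriv mu sigma alpha k bss br Hmu Hsigma Halpha Hbss_pos Hbss_eq).
Qed.
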